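(* In a diagonal positive unital circuit, every operator $O_k(\mathbf{x}_k)$ (for every unit $k$ and every assignment $\mathbf{x}_k$) is a diagonal matrix.
   Context: A partition circuit over discrete variables $\mathbf{x}=\{x_0,\dots,x_{N-1}\}$ is a rooted binary tree whose leaves are in bijection with the variables (leaf $k$ carries $x_k$ with finite value set $\Omega(X_k)$), each internal unit $k$ having two children $k_l,k_r$; $\mathbf{x}_k$ denotes an assignment to the variables at leaves below $k$. A diagonal positive unital circuit assigns: to each leaf $k$ diagonal complex matrices $\Delta_{x_k}$, $x_k\in\Omega(X_k)$, with $\sum_{x_k}\Delta_{x_k}\Delta_{x_k}^*=\mathbb{1}$, and sets $O_k(\mathbf{x}_k)=\Delta_{x_k}\Delta_{x_k}^*$; to each internal unit $k$ (with input dimension $n$, the size of $O_{k_l}\otimes O_{k_r}$, and output dimension $m$) diagonal $n\times n$ matrices $D_{kj}$, $j=1,\dots,m$, with $\operatorname{Tr}[D_{kj}D_{kj}^*]=1$, and sets $O_k(\mathbf{x}_k)=\sum_{j=1}^m J_jD_{kj}\big(O_{k_l}(\mathbf{x}_{k_l})\otimes O_{k_r}(\mathbf{x}_{k_r})\big)D_{kj}^*J_j^*$, where $J_j$ is the $m\times n$ matrix whose $j$-th row consists of ones and all other entries are zero, and $\otimes$ is the Kronecker product. *)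

From HB Require Import structures.
From mathcomp Require Import all_boot all_order all_algebra.
From mathcomp Require Import complex mxtens.
Set Implicit Arguments. Unset Strict Implicit. Unset Printing Implicit Defensive.
Import Order.TTheory GRing.Theory Num.Theory.
Local Open Scope ring_scope.

Definition adjmx (C : numClosedFieldType) m n (M : 'M[C]_(m, n)) : 'M[C]_(n, m) :=
  \matrix_(i, j) (M j i)^*.

Definition Jmx (C : pzRingType) m n (j : 'I_m) : 'M[C]_(m, n) :=
  \matrix_(a, b) (a == j)%:R.

(* A circuit over variables x_0..x_{N-1}, value sets Om i, indexed by the
   output (square) dimension of the unit.  A leaf carries a variable index i
   and matrices Delta_x (x in Om i); an internal unit with output dimension m
   carries the matrices D_j (j < m) of size (nl*nr) x (nl*nr). *)
Inductive circuit (C : Type) (N : nat) (Om : 'I_N -> finType) : nat -> Type :=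
| Leaf (i : 'I_N) (d : nat) (Delta : Om i -> 'M[C]_d) : circuit C Om d
| Node (nl nr m : nat) (l : circuit C Om nl) (r : circuit C Om nr)
       (D : 'I_m -> 'M[C]_(nl * nr)) : circuit C Om m.

Arguments Leaf {C N Om} i {d} Delta.
Arguments Node {C N Om nl nr m} l r D.

Fixpoint leaves C N (Om : 'I_N -> finType) m (c : circuit C Om m) : seq 'I_N :=
  match c with
  | Leaf i _ _ => [:: i]
  | Node _ _ _ l r _ => leaves l ++ leaves r
  end.

Definition partition_circuit C N (Om : 'I_N -> finType) m (c : circuit C Om m) :=
  perm_eq (leaves c) (enum 'I_N).

Fixpoint asg C N (Om : 'I_N -> finType) m (c : circuit C Om m) : Type :=
  match c with
  | Leaf i _ _ => Om i
  | Node _ _ _ l r _ => (asg l * asg r)%type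
  end.

Fixpoint Op (C : numClosedFieldType) N (Om : 'I_N -> finType) m
    (c : circuit C Om m) : asg c -> 'M[C]_m :=
  match c in circuit _ _ m return asg c -> 'M[C]_m with
  | Leaf i d Delta => fun x => Delta x *m adjmx (Delta x)
  | Node nl nr m l r D => fun x =>
      \sum_(j < m)
        (@Jmx C m (nl * nr)%N j *m D j *m (@Op C N Om nl l x.1 *t @Op C N Om nr r x.2)
           *m adjmx (D j) *m adjmx (@Jmx C m (nl * nr)%N j))
  end.

Fixpoint dpu_circuit (C : numClosedFieldType) N (Om : 'I_N -> finType) m
    (c : circuit C Om m) : Prop :=
  match c with
  | Leaf i d Delta =>
      (forall x, is_diag_mx (Delta x)) /\
      \sum_(x : Om i) (Delta x *m adjmx (Delta x)) = 1%:M
  | Node nl nr m l r D =>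
      dpu_circuit l /\ dpu_circuit r /\
      (forall j, is_diag_mx (D j) /\ \tr (D j *m adjmx (D j)) = 1)
  end.

Inductive subunit C N (Om : 'I_N -> finType) n (k : circuit C Om n) :
    forall m, circuit C Om m -> Prop :=
| subunit_refl : subunit k k
| subunit_l nl nr m (l : circuit C Om nl) (r : circuit C Om nr) D :
    subunit k l -> subunit k (Node (m:=m) l r D)
| subunit_r nl nr m (l : circuit C Om nl) (r : circuit C Om nr) D :
    subunit k r -> subunit k (Node (m:=m) l r D).

Arguments Op {C N Om m} c x.
Arguments asg {C N Om m} c.
Arguments leaves {C N Om m} c.
Arguments dpu_circuit {C N Om m} c.
Arguments partition_circuit {C N Om m} c.

From HB Require Import structures.
From mathcomp Require Import all_boot all_order all_algebra.
From mathcomp Require Import complex mxtens.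
Import Order.TTheory GRing.Theory Num.Theory.
Local Open Scope ring_scope.

(* At a leaf, O_k = Delta Delta^* is a product of diagonal matrices.  At an
   internal unit every summand J_j B J_j^* vanishes outside the entry (j, j),
   whatever B is, so internal operators are diagonal for free. *)

Lemma is_diag_mx_sum (V : nmodType) m n (I : Type) (r : seq I) (P : pred I)
    (F : I -> 'M[V]_(m, n)) :
  (forall i, P i -> is_diag_mx (F i)) -> is_diag_mx (\sum_(i <- r | P i) F i).
Proof.
move=> Fdiag; apply/is_diag_mxP => a b neq_ab.
by rewrite summxE big1 // => i /Fdiag /is_diag_mxP ->.
Qed.

Lemma adjmx_diag_mx (C : numClosedFieldType) n (d : 'rV[C]_n) :
  adjmx (diag_mx d) = diag_mx (\row_j (d 0 j)^*).
Proof.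
apply/matrixP => a b; rewrite !mxE rmorphMn eq_sym.
by have [->|_] := eqVneq a b; rewrite ?mulr0n.
Qed.

Lemma is_diag_mx_mul_adj (C : numClosedFieldType) n (A : 'M[C]_n) :
  is_diag_mx A -> is_diag_mx (A *m adjmx A).
Proof.
by move=> /diag_mxP[d ->]; rewrite adjmx_diag_mx mulmx_diag diag_mx_is_diag.
Qed.

Lemma Jmx_mul_adj_is_diag (C : numClosedFieldType) m n (j : 'I_m)
    (B : 'M[C]_n) :
  is_diag_mx (Jmx C n j *m B *m adjmx (Jmx C n j)).
Proof.
apply/is_diag_mxP => a b neq_ab; rewrite !mxE big1 // => k _; rewrite !mxE.
have [eq_aj|neq_aj] := eqVneq a j.
  have /negPf-> : b != j by apply: contraNneq neq_ab => eq_bj; rewrite eq_aj eq_bj.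
  by rewrite conjC0 mulr0.
by rewrite big1 ?mul0r // => l _; rewrite mxE (negPf neq_aj) mul0r.
Qed.

Lemma Op_Node_is_diag (C : numClosedFieldType) N (Om : 'I_N -> finType)
    nl nr m (l : circuit C Om nl) (r : circuit C Om nr)
    (D : 'I_m -> 'M[C]_(nl * nr)) (x : asg (Node l r D)) :
  is_diag_mx (Op (Node l r D) x).
Proof.
apply: is_diag_mx_sum => j _.
have := @Jmx_mul_adj_is_diag _ _ _ j (D j *m (Op l x.1 *t Op r x.2) *m adjmx (D j)).
by rewrite !mulmxA.
Qed.

Lemma Op_is_diag (C : numClosedFieldType) N (Om : 'I_N -> finType) m
    (c : circuit C Om m) :
  dpu_circuit c -> forall x, is_diag_mx (Op c x).
Proof.
case: c => [i d Delta [Delta_diag _] x | nl nr m' l r D _ x].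
  exact: is_diag_mx_mul_adj (Delta_diag x).
exact: Op_Node_is_diag.
Qed.

Lemma dpu_circuit_subunit (C : numClosedFieldType) N (Om : 'I_N -> finType)
    n (k : circuit C Om n) m (c : circuit C Om m) :
  subunit k c -> dpu_circuit c -> dpu_circuit k.
Proof.
by elim=> //= nl nr m' l r D _ IH; [case=> /IH | case=> _ [/IH]].
Qed.

Theorem proposition9 (R : rcfType) (N : nat) (Om : 'I_N -> finType) (m : nat)
    (c : circuit R[i] Om m) :
  partition_circuit c -> dpu_circuit c ->
  forall (n : nat) (k : circuit R[i] Om n), subunit k c ->
  forall x : asg k, is_diag_mx (Op k x).
Proof.
move=> _ dpu_c n k k_c; apply: Op_is_diag.
exact: dpu_circuit_subunit k_c dpu_c.
Qed.
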